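(* Consider the ride-hailing model in the context, and let $\hat{\bm x}^A$ be an AV-first strategy, with residual demand $\hat b^C_i=b_i-\sum_j\hat x^A_{ji}$. The AV-first policy is optimal, i.e. $\sum_{i,\alpha}r^A_{i\alpha}\hat x^A_{i\alpha}+\pi(\hat{\bm b}^C)$ equals the optimal value of $\mathcal{OPT}$, if either: (i) the residual demand is fully served by CVs in the CV equilibrium, i.e. an optimal solution $\hat{\bm x}^C$ of $\mathcal{CV}(\hat{\bm b}^C)$ satisfies $\sum_j\hat x^C_{ji}=\hat b^C_i$ for all $i$; or (ii) there exists $\bm x^A\in\mathbb R^{L\times L}_{\ge0}$ satisfying flow balance and $\sum_{i,\alpha}\tau^{dr}_{i\alpha}x^A_{i\alpha}\le M$ with $\sum_j x^A_{ji}=b_i$ for all $i$.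
   Context: Model. There are $L$ regions $\{1,\dots,L\}$. For regions $i,j$, $b_{ij}\ge0$ is the customer rate from $i$ to $j$; $b_i=\sum_j b_{ij}$ (assumed $>0$), $q_{ij}=b_{ij}/b_i$. Travel times satisfy $t_{ij}>0$ for $i\ne j$, $t_{ii}=0$. Constants: $p>0$, $c\ge0$, $R\in(0,1)$, CV fleet mass $N>0$, AV fleet mass $M\ge0$. For $i,\alpha$: $\tau^{dr}_{i\alpha}=t_{i\alpha}+\sum_j q_{\alpha j}t_{\alpha j}$, $r^A_{i\alpha}=p\sum_j q_{\alpha j}t_{\alpha j}-c\tau^{dr}_{i\alpha}$, $r^C_{i\alpha}=p(1-R)\sum_j q_{\alpha j}t_{\alpha j}-c\tau^{dr}_{i\alpha}$, $r^{C2P}_{i\alpha}=pR\sum_j q_{\alpha j}t_{\alpha j}$. A matrix $\bm x\in\mathbb R^{L\times L}_{\ge0}$ satisfies flow balance if $\sum_j(\sum_k x_{kj})q_{ji}=\sum_\alpha x_{i\alpha}$ for all $i$. $\mathcal{CV}(\bm b^C)$: maximize $N\log\sum_{i,\alpha}r^C_{i\alpha}x_{i\alpha}-\sum_{i,\alpha}\tau^{dr}_{i\alpha}x_{i\alpha}$ over $\bm x\ge0$ satisfying flow balance and $\sum_j x_{ji}\le b^C_i$ for all $i$; $\pi(\bm b^C)=\sum_{i,\alpha}r^{C2P}_{i\alpha}x_{i\alpha}$ for an optimal solution $\bm x$ (same for all optimal solutions). $\mathcal{OPT}$: maximize $\sum_{i,\alpha}r^A_{i\alpha}x^A_{i\alpha}+\pi(\bm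 b^C)$ over $\bm b^C\in\mathbb R^L_{\ge0}$, $\bm x^A\in\mathbb R^{L\times L}_{\ge0}$ subject to $\sum_j x^A_{ji}+b^C_i\le b_i$ for all $i$, flow balance for $\bm x^A$, and $\sum_{i,\alpha}\tau^{dr}_{i\alpha}x^A_{i\alpha}\le M$. AV-first policy: an AV-first strategy $\hat{\bm x}^A$ is an optimal solution of $\mathcal{OPT}$ with $\bm b^C$ fixed to $\bm 0$, i.e. it maximizes $\sum_{i,\alpha}r^A_{i\alpha}x^A_{i\alpha}$ over $\bm x^A\ge0$ with $\sum_j x^A_{ji}\le b_i$ for all $i$, flow balance, and $\sum_{i,\alpha}\tau^{dr}_{i\alpha}x^A_{i\alpha}\le M$; the remaining demand $\hat{\bm b}^C$ is then revealed to CVs, giving platform profit $\sum_{i,\alpha}r^A_{i\alpha}\hat x^A_{i\alpha}+\pi(\hat{\bm b}^C)$. *)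

From HB Require Import structures.
From mathcomp Require Import all_boot all_order all_algebra.
From mathcomp Require Import all_classical all_reals.
From mathcomp Require Import ereal exp.
Set Implicit Arguments. Unset Strict Implicit. Unset Printing Implicit Defensive.
Import Order.TTheory GRing.Theory Num.Theory.
Local Open Scope ring_scope.

Section Model.
Variables (R : realType) (L : nat).
Notation mat := ('I_L -> 'I_L -> R).
Variables (b t : mat) (p c Rc N M : R).

Definition brate (i : 'I_L) : R := \sum_(j < L) b i j.
Definition q (i j : 'I_L) : R := b i j / brate i.
Definition Dbar (a : 'I_L) : R := \sum_(j < L) q a j * t a j.
Definition tau (i a : 'I_L) : R := t i a + Dbar a.
Definition rA (i a : 'I_L) : R := p * Dbar a - c * tau i a.
Definition rC (i a : 'I_L) : R := p * (1 - Rc) * Dbar a - c * tau i a.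
Definition rC2P (i a : 'I_L) : R := p * Rc * Dbar a.

Definition lin (w x : mat) : R := \sum_(i < L) \sum_(a < L) w i a * x i a.
Definition inflow (x : mat) (i : 'I_L) : R := \sum_(j < L) x j i.
Definition nonneg (x : mat) : Prop := forall i a, 0 <= x i a.
Definition flow_balance (x : mat) : Prop :=
  forall i, \sum_(j < L) (\sum_(k < L) x k j) * q j i = \sum_(a < L) x i a.

Definition CV_feasible (bC : 'I_L -> R) (x : mat) : Prop :=
  nonneg x /\ flow_balance x /\ forall i, inflow x i <= bC i.
(* Objective of CV, in the extended reals, with the convention log y = -oo
   for y <= 0. *)
Definition CV_obj (x : mat) : \bar R :=
  if 0 < lin rC x then ((N * ln (lin rC x) - lin tau x)%:E)%E else (-oo)%E.
Definition CV_opt (bC : 'I_L -> R) (x : mat) : Prop :=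
  CV_feasible bC x /\ forall y, CV_feasible bC y -> (CV_obj y <= CV_obj x)%E.
(* platform profit from CVs, pi(bC), computed from an optimal solution x *)
Definition piCV (x : mat) : R := lin rC2P x.

Definition OPT_feasible (bC : 'I_L -> R) (xA : mat) : Prop :=
  (forall i, 0 <= bC i) /\ nonneg xA /\
  (forall i, inflow xA i + bC i <= brate i) /\
  flow_balance xA /\ lin tau xA <= M.

Definition AV_first (xA : mat) : Prop :=
  OPT_feasible (fun _ => 0) xA /\
  forall y, OPT_feasible (fun _ => 0) y -> lin rA y <= lin rA xA.

Definition residual (xA : mat) (i : 'I_L) : R := brate i - inflow xA i.

End Model.

From HB Require Import structures.
From mathcomp Require Import all_boot all_order all_algebra.
From mathcomp Require Import all_classical all_reals.
From mathcomp Require Import ereal exp.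
From mathcomp Require Import ring lra.
Set Implicit Arguments. Unset Strict Implicit. Unset Printing Implicit Defensive.
Import Order.TTheory GRing.Theory Num.Theory.
Local Open Scope ring_scope.

(* All three revenues are linear in the trip time D (the time spent carrying
   customers) and the driving time T of a fleet flow, with rA = rC + pi.
   If some budget-feasible AV flow already attains the largest possible trip
   time (case (ii), or case (i) when the residual CV commission vanishes), then
   exceeding the budget cannot raise rA, so rA xhA bounds the AV revenue of
   every flow within the demand, in particular of xA + xC, which is at least
   rA xA + pi xC.  Otherwise the residual CVs earn rC > 0; moving from a
   budget-feasible xA towards xhA + xhC until the budget binds and using the
   optimality of xhA there gives rC xA <= rC xhA, and as CVs can only serve the
   demand left by xA, pi xC <= p R D(residual of xA); these add up to the
   claim.  A CV optimum with rC <= 0 earns no commission, as 0 is then also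
   optimal. *)

Lemma exists_mix_eq (R : realFieldType) (u v w : R) :
  u <= w -> w < v -> exists2 mu, 0 <= mu < 1 & (1 - mu) * u + mu * v = w.
Proof.
move=> uw wv; have vu_gt0 : 0 < v - u by rewrite subr_gt0 (le_lt_trans uw).
exists ((w - u) / (v - u)); last by field; rewrite gt_eqF.
by rewrite divr_ge0 ?(ltW vu_gt0) ?subr_ge0 //= ltr_pdivrMr // mul1r ltrD2r.
Qed.

(* (Dx, Tx), (Dh, Th), (Dt, Tt): trip and driving times of x, xhA and xt; the
   last hypothesis says that the budget-feasible mix (1 - mu) x + mu (xhA + xt)
   earns no more AV revenue than xhA. *)
Lemma mix_rC_le (R : realFieldType) (p c Rc Dx Tx Dh Th Dt Tt mu : R) :
  0 <= c -> 0 <= Rc <= 1 -> 0 <= mu < 1 ->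
  Th <= (1 - mu) * Tx + mu * (Th + Tt) ->
  0 <= p * (1 - Rc) * Dt - c * Tt ->
  (1 - mu) * (p * Dx - c * Tx) + mu * ((p * Dh - c * Th) + (p * Dt - c * Tt))
    <= p * Dh - c * Th ->
  p * (1 - Rc) * Dx - c * Tx <= p * (1 - Rc) * Dh - c * Th.
Proof.
move=> c_ge0 /andP[Rc_ge0 Rc_le1] /andP[mu_ge0 mu_lt1] Th_le rCt_ge0 rA_le.
have subRc_ge0 : 0 <= 1 - Rc by rewrite subr_ge0.
have submu_gt0 : 0 < 1 - mu by rewrite subr_gt0.
rewrite -subr_ge0 -(pmulr_rge0 _ submu_gt0).
have := ler_wpM2l subRc_ge0 rA_le.
have : 0 <= mu * (p * (1 - Rc) * Dt - c * Tt) by rewrite mulr_ge0.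
have : 0 <= Rc * c * ((1 - mu) * Tx + mu * (Th + Tt) - Th).
  by rewrite !mulr_ge0 // subr_ge0.
nra.
Qed.

Section Model.
Variables (R : realType) (L : nat).
Notation mat := ('I_L -> 'I_L -> R).
Variables (b t : mat) (p c Rc N M : R).

Notation rA := (rA b t p c).
Notation rC := (rC b t p c Rc).
Notation tau := (tau b t).
Notation piCV := (piCV b t p Rc).
Notation CV_feasible := (CV_feasible b).
Notation CV_opt := (CV_opt b t p c Rc N).

Definition comb (al be : R) (x y : mat) : mat :=
  fun i a => al * x i a + be * y i a.

Definition trip_time (v : 'I_L -> R) : R := \sum_(a < L) Dbar b t a * v a.

Lemma lin_comb (w : mat) al be x y :
  lin w (comb al be x y) = al * lin w x + be * lin w y.
Proof.
rewrite /lin /comb !mulr_sumr -big_split; apply: eq_bigr => i _.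
rewrite !mulr_sumr -big_split; apply: eq_bigr => a _ /=; ring.
Qed.

Lemma inflow_comb al be x y i :
  inflow (comb al be x y) i = al * inflow x i + be * inflow y i.
Proof. by rewrite /inflow /comb big_split /= -!mulr_sumr. Qed.

Lemma nonneg_comb al be x y : 0 <= al -> 0 <= be -> nonneg x -> nonneg y ->
  nonneg (comb al be x y).
Proof. by move=> al_ge0 be_ge0 x_ge0 y_ge0 i a; rewrite addr_ge0 ?mulr_ge0. Qed.

Lemma flow_balance_comb al be x y : flow_balance b x -> flow_balance b y ->
  flow_balance b (comb al be x y).
Proof.
move=> x_bal y_bal i; rewrite /comb big_split /= -!mulr_sumr -x_bal -y_bal.
rewrite !mulr_sumr -big_split; apply: eq_bigr => j _ /=.
rewrite big_split /= -!mulr_sumr; ring.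
Qed.

Lemma lin_Dbar_tau al be x :
  lin (fun i a => al * Dbar b t a - be * tau i a) x
  = al * trip_time (inflow x) - be * lin tau x.
Proof.
transitivity (al * lin (fun _ a => Dbar b t a) x - be * lin tau x).
  rewrite /lin !mulr_sumr -sumrB; apply: eq_bigr => i _.
  by rewrite !mulr_sumr -sumrB; apply: eq_bigr => a _; ring.
congr (_ * _ - _); rewrite /lin /trip_time /inflow exchange_big /=.
by apply: eq_bigr => a _; rewrite mulr_sumr.
Qed.

Lemma lin_rA x : lin rA x = p * trip_time (inflow x) - c * lin tau x.
Proof. exact: lin_Dbar_tau. Qed.

Lemma lin_rC x : lin rC x = p * (1 - Rc) * trip_time (inflow x) - c * lin tau x.
Proof. exact: lin_Dbar_tau. Qed.

Lemma piCV_trip_time x : piCV x = p * Rc * trip_time (inflow x).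
Proof.
have := lin_Dbar_tau (p * Rc) 0 x; rewrite mul0r subr0 => <-.
by apply: eq_bigr => i _; apply: eq_bigr => a _; rewrite mul0r subr0.
Qed.

Lemma trip_time_residual x :
  trip_time (residual b x) = trip_time (brate b) - trip_time (inflow x).
Proof. by rewrite /trip_time -sumrB; apply: eq_bigr => a _; rewrite mulrBr. Qed.

Lemma lin0 (w : mat) : lin w (fun _ _ => 0) = 0.
Proof. by rewrite /lin big1 // => i _; rewrite big1 // => a _; rewrite mulr0. Qed.

Lemma eq_trip_time u v : u =1 v -> trip_time u = trip_time v.
Proof. by move=> uv; apply: eq_bigr => a _; rewrite uv. Qed.

Hypothesis b_ge0 : forall i j, 0 <= b i j.
Hypothesis brate_gt0 : forall i, 0 < brate b i.
Hypothesis t_gt0 : forall i j, i != j -> 0 < t i j.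
Hypothesis t_diag : forall i, t i i = 0.
Hypothesis p_gt0 : 0 < p.
Hypothesis c_ge0 : 0 <= c.
Hypothesis Rc_gt0 : 0 < Rc.
Hypothesis Rc_lt1 : Rc < 1.

Lemma Dbar_ge0 a : 0 <= Dbar b t a.
Proof.
apply: sumr_ge0 => j _; apply: mulr_ge0; first by rewrite divr_ge0 // ltW.
by case: (eqVneq a j) => [->|/t_gt0/ltW //]; rewrite t_diag.
Qed.

Lemma ler_trip_time u v : (forall a, u a <= v a) -> trip_time u <= trip_time v.
Proof. by move=> uv; apply: ler_sum => a _; rewrite ler_wpM2l ?Dbar_ge0. Qed.

Lemma trip_time_ge0 v : (forall a, 0 <= v a) -> 0 <= trip_time v.
Proof. by move=> v_ge0; apply: sumr_ge0 => a _; rewrite mulr_ge0 ?Dbar_ge0. Qed.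

Lemma piCV_ge0 x : nonneg x -> 0 <= piCV x.
Proof.
move=> x_ge0; rewrite piCV_trip_time !mulr_ge0 ?(ltW p_gt0) ?(ltW Rc_gt0) //.
by apply: trip_time_ge0 => a; apply: sumr_ge0.
Qed.

Lemma lin_rA_rC_piCV x : lin rA x = lin rC x + piCV x.
Proof. by rewrite lin_rA lin_rC piCV_trip_time; ring. Qed.

(* With the convention log y = -oo for y <= 0, x has objective -oo, hence so
   does every feasible point. *)
Lemma CV_opt0 bC x : (forall i, 0 <= bC i) -> CV_opt bC x ->
  ~~ (0 < lin rC x) -> CV_opt bC (fun _ _ => 0).
Proof.
move=> bC_ge0 [x_feas x_opt] x_rC; split.
  split; first by move=> i a.
  split; last by move=> i; rewrite /inflow big1.
  by move=> i; rewrite !big1 // => j _; rewrite ?big1 ?mul0r.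
move=> y y_feas; have := x_opt y y_feas.
by rewrite {2}/CV_obj (negbTE x_rC) /CV_obj lin0 ltxx.
Qed.

Hypothesis piCV_unique : forall bC x y, (forall i, 0 <= bC i) ->
  CV_opt bC x -> CV_opt bC y -> piCV x = piCV y.

Lemma CV_opt_piCV_eq0_or_rC_gt0 bC x : (forall i, 0 <= bC i) ->
  CV_opt bC x -> piCV x = 0 \/ 0 < lin rC x.
Proof.
move=> bC_ge0 x_opt; have [|x_rC] := boolP (0 < lin rC x); first by right.
by left; rewrite (piCV_unique bC_ge0 x_opt (CV_opt0 bC_ge0 x_opt x_rC)) /piCV lin0.
Qed.

Definition admissible (x : mat) : Prop :=
  [/\ nonneg x, flow_balance b x & forall i, inflow x i <= brate b i].

Definition budget_feasible (x : mat) : Prop := admissible x /\ lin tau x <= M.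

Lemma admissible_add x y : nonneg x -> nonneg y ->
  flow_balance b x -> flow_balance b y ->
  (forall i, inflow x i + inflow y i <= brate b i) -> admissible (comb 1 1 x y).
Proof.
move=> x_ge0 y_ge0 x_bal y_bal xy_in; split.
- exact: nonneg_comb.
- exact: flow_balance_comb.
- by move=> i; rewrite inflow_comb !mul1r.
Qed.

Lemma admissible_mix mu x y : 0 <= mu <= 1 -> admissible x -> admissible y ->
  admissible (comb (1 - mu) mu x y).
Proof.
move=> /andP[mu_ge0 mu_le1] [x_ge0 x_bal x_in] [y_ge0 y_bal y_in].
have submu_ge0 : 0 <= 1 - mu by rewrite subr_ge0.
split.
- exact: nonneg_comb.
- exact: flow_balance_comb.
- move=> i; rewrite inflow_comb.
  have := ler_wpM2l submu_ge0 (x_in i); have := ler_wpM2l mu_ge0 (y_in i); lra.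
Qed.

Lemma OPT_feasible_budget bC x : OPT_feasible b t M bC x -> budget_feasible x.
Proof.
move=> [bC_ge0 [x_ge0 [x_in [x_bal x_T]]]]; split=> //; split=> // i.
by have := x_in i; have := bC_ge0 i; lra.
Qed.

Variable xhA : mat.
Hypothesis xhA_AV_first : AV_first b t p c M xhA.

Lemma AV_first_budget_feasible : budget_feasible xhA.
Proof. exact: OPT_feasible_budget xhA_AV_first.1. Qed.

Lemma residual_AV_first_ge0 i : 0 <= residual b xhA i.
Proof. by case: AV_first_budget_feasible => -[_ _ /(_ i)]; rewrite subr_ge0. Qed.

Lemma lin_rA_le_AV_first x : budget_feasible x -> lin rA x <= lin rA xhA.
Proof.
move=> [[x_ge0 x_bal x_in] x_T]; apply: xhA_AV_first.2.
split=> [i|]; first exact: lexx.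
by split=> //; split=> // i; rewrite addr0.
Qed.

Lemma lin_rA_le_AV_first_saturated xf z : budget_feasible xf ->
  trip_time (inflow xf) = trip_time (brate b) -> admissible z ->
  lin rA z <= lin rA xhA.
Proof.
move=> xf_bf xf_sat [z_ge0 z_bal z_in]; have [z_T|z_T] := lerP (lin tau z) M.
  exact: lin_rA_le_AV_first.
have := lin_rA_le_AV_first xf_bf; case: xf_bf => _ xf_T.
have := ler_wpM2l (ltW p_gt0) (ler_trip_time z_in).
have := ler_wpM2l c_ge0 (ltW z_T); have := ler_wpM2l c_ge0 xf_T.
rewrite !lin_rA xf_sat; lra.
Qed.

(* xhA + xt would beat xhA, so it breaks the budget, which therefore binds
   somewhere on the segment from x to xhA + xt. *)
Lemma lin_rC_le_AV_first xt x : nonneg xt -> flow_balance b xt ->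
  (forall i, inflow xhA i + inflow xt i <= brate b i) -> 0 < lin rC xt ->
  budget_feasible x -> lin rC x <= lin rC xhA.
Proof.
move=> xt_ge0 xt_bal xt_in xt_rC [x_adm x_T].
have [[xh_ge0 xh_bal _] xh_T] := AV_first_budget_feasible.
set y := comb 1 1 xhA xt.
have y_adm : admissible y by apply: admissible_add.
have y_T : M < lin tau y.
  rewrite ltNge; apply/negP => y_T; have := lin_rA_le_AV_first (conj y_adm y_T).
  by rewrite lin_comb (lin_rA_rC_piCV xt); have := piCV_ge0 xt_ge0; lra.
have [mu /andP[mu_ge0 mu_lt1] T_mix] := exists_mix_eq x_T y_T.
have mu_le1 : 0 <= mu <= 1 by rewrite mu_ge0 ltW.
have w_bf : budget_feasible (comb (1 - mu) mu x y).
  by split; [exact: admissible_mix | rewrite lin_comb T_mix].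
have := lin_rA_le_AV_first w_bf; rewrite /y !lin_comb !mul1r in T_mix *.
rewrite !lin_rA !lin_rC; apply: mix_rC_le => //.
- by rewrite !ltW.
- by rewrite mu_ge0.
- by rewrite T_mix.
- by rewrite -lin_rC ltW.
Qed.

Lemma piCV_le_residual bC x xC : (forall i, inflow x i + bC i <= brate b i) ->
  CV_feasible bC xC -> piCV xC <= p * Rc * trip_time (residual b x).
Proof.
move=> x_in [_ [_ xC_in]].
rewrite piCV_trip_time ler_wpM2l ?mulr_ge0 ?(ltW p_gt0) ?(ltW Rc_gt0) //.
by apply: ler_trip_time => a; have := x_in a; have := xC_in a; rewrite /residual; lra.
Qed.

Lemma AV_first_optimal_saturated xf bC xA xC : budget_feasible xf ->
  trip_time (inflow xf) = trip_time (brate b) ->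
  OPT_feasible b t M bC xA -> CV_opt bC xC ->
  lin rA xA + piCV xC <= lin rA xhA.
Proof.
move=> xf_bf xf_sat xA_opt xC_opt.
have xA_le := lin_rA_le_AV_first (OPT_feasible_budget xA_opt).
have [bC_ge0 [xA_ge0 [xA_in [xA_bal _]]]] := xA_opt.
have [|xC_rC] := CV_opt_piCV_eq0_or_rC_gt0 bC_ge0 xC_opt; first by move->; lra.
have [[xC_ge0 [xC_bal xC_in]] _] := xC_opt.
have y_adm : admissible (comb 1 1 xA xC).
  by apply: admissible_add => // i; have := xA_in i; have := xC_in i; lra.
have := lin_rA_le_AV_first_saturated xf_bf xf_sat y_adm.
by rewrite lin_comb (lin_rA_rC_piCV xC); lra.
Qed.

Lemma AV_first_optimal_profitable xt bC xA xC :
  CV_feasible (residual b xhA) xt -> (forall i, inflow xt i = residual b xhA i) ->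
  0 < lin rC xt -> OPT_feasible b t M bC xA -> CV_feasible bC xC ->
  lin rA xA + piCV xC <= lin rA xhA + piCV xt.
Proof.
move=> [xt_ge0 [xt_bal _]] xt_full xt_rC xA_opt xC_feas.
have xt_in i : inflow xhA i + inflow xt i <= brate b i.
  by rewrite xt_full /residual addrC subrK.
have := lin_rC_le_AV_first xt_ge0 xt_bal xt_in xt_rC (OPT_feasible_budget xA_opt).
have := piCV_le_residual xA_opt.2.2.1 xC_feas.
rewrite !piCV_trip_time (eq_trip_time xt_full) !trip_time_residual !lin_rA !lin_rC.
lra.
Qed.

Lemma saturated_or_profitable :
  (exists xhC, CV_opt (residual b xhA) xhC /\
               forall i, inflow xhC i = residual b xhA i) \/
  (exists xA, nonneg xA /\ flow_balance b xA /\ lin tau xA <= M /\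
              forall i, inflow xA i = brate b i) ->
  (exists2 xf, budget_feasible xf & trip_time (inflow xf) = trip_time (brate b))
  \/ exists xt, [/\ CV_opt (residual b xhA) xt,
                    forall i, inflow xt i = residual b xhA i & 0 < lin rC xt].
Proof.
case=> [[xt [xt_opt xt_full]] | [xf [xf_ge0 [xf_bal [xf_T xf_full]]]]]; last first.
  by left; exists xf; [split=> //; split=> // i; rewrite xf_full | apply: eq_trip_time].
have [xt_pi0|xt_rC] := CV_opt_piCV_eq0_or_rC_gt0 residual_AV_first_ge0 xt_opt.
  left; exists xhA; first exact: AV_first_budget_feasible.
  move/eqP: xt_pi0; rewrite piCV_trip_time (eq_trip_time xt_full).
  rewrite trip_time_residual !mulf_eq0 (gt_eqF p_gt0) (gt_eqF Rc_gt0) /=.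
  by rewrite subr_eq0 => /eqP.
by right; exists xt.
Qed.

Lemma AV_first_optimal :
  (exists xhC, CV_opt (residual b xhA) xhC /\
               forall i, inflow xhC i = residual b xhA i) \/
  (exists xA, nonneg xA /\ flow_balance b xA /\ lin tau xA <= M /\
              forall i, inflow xA i = brate b i) ->
  forall xhC, CV_opt (residual b xhA) xhC ->
  forall bC xA xC, OPT_feasible b t M bC xA -> CV_opt bC xC ->
  lin rA xA + piCV xC <= lin rA xhA + piCV xhC.
Proof.
move=> /saturated_or_profitable cond xhC xhC_opt bC xA xC xA_opt xC_opt.
case: cond => [[xf xf_bf xf_sat] | [xt [xt_opt xt_full xt_rC]]].
  have := piCV_ge0 xhC_opt.1.1.
  have := AV_first_optimal_saturated xf_bf xf_sat xA_opt xC_opt; lra.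
rewrite (piCV_unique residual_AV_first_ge0 xhC_opt xt_opt).
exact: AV_first_optimal_profitable xt_opt.1 xt_full xt_rC xA_opt xC_opt.1.
Qed.

End Model.

Theorem proposition6 (R : realType) (L : nat) (b t : 'I_L -> 'I_L -> R)
    (p c Rc N M : R) :
  (forall i j, 0 <= b i j) ->
  (forall i, 0 < brate b i) ->
  (forall i j, i != j -> 0 < t i j) ->
  (forall i, t i i = 0) ->
  0 < p -> 0 <= c -> 0 < Rc < 1 -> 0 < N -> 0 <= M ->
  (* standing claim of the model: pi(bC) does not depend on the chosen
     optimal solution of CV(bC) *)
  (forall (bC : 'I_L -> R) x y, (forall i, 0 <= bC i) ->
     CV_opt b t p c Rc N bC x -> CV_opt b t p c Rc N bC y ->
     piCV b t p Rc x = piCV b t p Rc y) ->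
  forall xhA : 'I_L -> 'I_L -> R,
  AV_first b t p c M xhA ->
  ((exists xhC, CV_opt b t p c Rc N (residual b xhA) xhC /\
                forall i, inflow xhC i = residual b xhA i)
   \/
   (exists xA, nonneg xA /\ flow_balance b xA /\ lin (tau b t) xA <= M /\
               forall i, inflow xA i = brate b i)) ->
  forall xhC, CV_opt b t p c Rc N (residual b xhA) xhC ->
  forall (bC : 'I_L -> R) (xA xC : 'I_L -> 'I_L -> R),
    OPT_feasible b t M bC xA -> CV_opt b t p c Rc N bC xC ->
    lin (rA b t p c) xA + piCV b t p Rc xC
      <= lin (rA b t p c) xhA + piCV b t p Rc xhC.
Proof.
move=> b_ge0 brate_gt0 t_gt0 t_diag p_gt0 c_ge0 /andP[Rc_gt0 Rc_lt1] _ _ piCV_unique.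
move=> xhA xhA_AV_first; exact: AV_first_optimal.
Qed.
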